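(* Let $\Omega=\{\omega_r=(1,r)^{\mathrm t} : r\in\mathcal R\}\subset\mathbb R^{n+1}$ be a GPT state space with unit effect $u=(1,\mathbf 0)^{\mathrm t}$, and suppose every effect $e\in\mathcal E$ can be written as $e=\gamma\,(1,m)^{\mathrm t}$ with $\gamma\in[0,1]$ and $m\in\mathcal M$, for some set $\mathcal M\subset\mathbb R^n$. Then $$\chi_C(\Omega)\le \sup_{r\in\mathcal R,\ m\in\mathcal M}\log_2(1+m\cdot r)\le \log_2(1+MR),$$ where $M=\sup_{m\in\mathcal M}\lVert m\rVert$ and $R=\sup_{r\in\mathcal R}\lVert r\rVert$.
   Context: A single-system GPT state space is a set $\Omega=\{\omega_r=(1,r)^{\mathrm t}: r\in\mathcal R\}\subset\mathbb R^{n+1}$ with $\mathcal R\subset\mathbb R^n$ compact and convex; the unit effect is $u=(1,\mathbf 0)^{\mathrm t}$. The effect set is $\mathcal E=\{e\in\mathbb R^{n+1}: 0\le e\cdot\omega\le 1\ \forall\omega\in\Omega\}$ (Euclidean inner product). A measurement is a finite family $\{e_y\}\subset\mathcal E$ with $\sum_y e_y=u$; outcome $y$ on state $\omega$ has probability $e_y\cdot\omega$. The classical capacity $\chi_C(\Omega)$ is the supremum of the mutual information $I(X:Y)=\sum_{x,y}p(x,y)\log_2\frac{p(x,y)}{p(x)p(y)}$ over all finite message sets with probability distributions $p_x$, encoding states $\omega_x\in\Omega$ and measurements $\{e_y\}$, where $p(x,y)=p_x\,e_y\cdot\omega_x$. *)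

From mathcomp Require Import all_boot.
From Stdlib Require Import Reals.
Set Implicit Arguments.
Unset Strict Implicit.
Unset Printing Implicit Defensive.
Local Open Scope R_scope.

Definition vec (n : nat) := 'I_n -> R.

Definition dotv (n : nat) (a b : vec n) : R := \big[Rplus/0]_(i < n) (a i * b i).
Definition normv (n : nat) (a : vec n) : R := sqrt (dotv a a).

Definition log2 (x : R) : R := ln x / ln 2.

(* A vector of R^{n+1} written as (first coordinate, remaining n coordinates). *)
Definition vec1 (n : nat) := (R * vec n)%type.

Definition omega (n : nat) (r : vec n) : vec1 n := (1, r).

Definition dot1 (n : nat) (e w : vec1 n) : R := fst e * fst w + dotv (snd e) (snd w).

Definition unit_effect (n : nat) : vec1 n := (1, fun _ => 0).

Definition scaled_effect (n : nat) (g : R) (m : vec n) : vec1 n := (g, fun i => g * m i).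

Definition convex_set (n : nat) (A : vec n -> Prop) : Prop :=
  forall a b t, A a -> A b -> 0 <= t <= 1 ->
    A (fun i => t * a i + (1 - t) * b i).

Definition converges_to (n : nat) (u : nat -> vec n) (l : vec n) : Prop :=
  forall eps, 0 < eps -> exists N, forall k, (N <= k)%coq_nat ->
    normv (fun i => u k i - l i) < eps.

Definition compact_set (n : nat) (A : vec n -> Prop) : Prop :=
  forall u : nat -> vec n, (forall k, A (u k)) ->
    exists (phi : nat -> nat) (l : vec n),
      (forall k, (phi k < phi (S k))%coq_nat) /\ A l /\ converges_to (fun k => u (phi k)) l.

Definition is_effect (n : nat) (Rset : vec n -> Prop) (e : vec1 n) : Prop :=
  forall r, Rset r -> 0 <= dot1 e (omega r) <= 1.

(* mutual information I(X:Y) of the joint distribution p(x,y) = p_x * e_y.omega_x,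
   with the convention 0 log 0 = 0 (terms with p(x,y) = 0 are dropped). *)
Definition mutual_info (k l : nat) (pxy : 'I_k -> 'I_l -> R) : R :=
  let px x := \big[Rplus/0]_(y < l) pxy x y in
  let py y := \big[Rplus/0]_(x < k) pxy x y in
  \big[Rplus/0]_(x < k) \big[Rplus/0]_(y < l)
     (if Rlt_dec 0 (pxy x y) then pxy x y * log2 (pxy x y / (px x * py y)) else 0).

(* a finite encoding/decoding scheme on the state space Omega_R:
   distribution p on k messages, encoding states omega_{r_x}, measurement {e_y}_{y<l} *)
Definition valid_scheme (n : nat) (Rset : vec n -> Prop) (k l : nat)
  (p : 'I_k -> R) (r : 'I_k -> vec n) (e : 'I_l -> vec1 n) : Prop :=
  (forall x, 0 <= p x) /\ \big[Rplus/0]_(x < k) p x = 1 /\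
  (forall x, Rset (r x)) /\
  (forall y, is_effect Rset (e y)) /\
  \big[Rplus/0]_(y < l) fst (e y) = fst (unit_effect n) /\
  (forall i, \big[Rplus/0]_(y < l) snd (e y) i = snd (unit_effect n) i).

Definition joint (n k l : nat) (p : 'I_k -> R) (r : 'I_k -> vec n) (e : 'I_l -> vec1 n)
  : 'I_k -> 'I_l -> R := fun x y => p x * dot1 (e y) (omega (r x)).

(* Write each effect as e_y = g_y (1, m_y).  On a state omega_r it gives
   g_y (1 + m_y . r), so whenever p(x,y) > 0 the information density factors as
     p(x,y) / (p_x p(y)) = (1 + m_y . r_x) * (g_y / p(y)),
   whose first factor has log2 at most the supremum S.  The second factor only
   costs sum_y p(y) log2 (g_y / p(y)) <= (sum_y g_y - 1) / ln 2 = 0 (Gibbs'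
   inequality, via ln t <= t - 1), since the g_y add up to the first coordinate
   of the unit effect.  The bound by log2 (1 + M R) is Cauchy-Schwarz. *)
From HB Require Import structures.
From mathcomp Require Import all_boot.
From Stdlib Require Import Reals Lra.
Local Open Scope R_scope.

Lemma Rplus_associative : associative Rplus.
Proof. by move=> x y z; rewrite Rplus_assoc. Qed.

HB.instance Definition _ :=
  Monoid.isComLaw.Build R 0 Rplus Rplus_associative Rplus_comm Rplus_0_l.

Lemma Rsum_mull n c (F : 'I_n -> R) :
  \big[Rplus/0]_(i < n) (c * F i) = c * \big[Rplus/0]_(i < n) F i.
Proof. exact/esym/(big_morph _ (Rmult_plus_distr_l c) (Rmult_0_r c)). Qed.

Lemma Rsum_mulr n c (F : 'I_n -> R) :
  \big[Rplus/0]_(i < n) (F i * c) = \big[Rplus/0]_(i < n) F i * c.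
Proof.
exact/esym/(big_morph (fun x => x * c) (fun x y => Rmult_plus_distr_r x y c) (Rmult_0_l c)).
Qed.

Lemma Rsum_le n (F G : 'I_n -> R) :
  (forall i, F i <= G i) -> \big[Rplus/0]_(i < n) F i <= \big[Rplus/0]_(i < n) G i.
Proof.
by move=> FG; apply: (big_ind2 Rle) => [|x1 x2 y1 y2|i _]; [lra|lra|apply: FG].
Qed.

Lemma Rsum_ge0 n (F : 'I_n -> R) : (forall i, 0 <= F i) -> 0 <= \big[Rplus/0]_(i < n) F i.
Proof. by move=> F0; apply: (big_ind (Rle 0)) => [|x y|i _]; [lra|lra|apply: F0]. Qed.

Lemma Rsum_ge_term n (F : 'I_n -> R) j :
  (forall i, 0 <= F i) -> F j <= \big[Rplus/0]_(i < n) F i.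
Proof.
move=> F0; rewrite (bigD1 j) //= -{1}[F j]Rplus_0_r; apply: Rplus_le_compat_l.
by apply: (big_ind (Rle 0)) => [|x y|i _]; [lra|lra|apply: F0].
Qed.

Lemma discriminant_le A B C :
  0 <= A -> (forall t, 0 <= t * t * A + 2 * t * C + B) -> C * C <= A * B.
Proof.
move=> A0; case: (Rle_lt_or_eq_dec _ _ A0) => [A_gt0 | <-] quad_ge0.
  have := quad_ge0 (- C / A).
  have -> : - C / A * (- C / A) * A + 2 * (- C / A) * C + B = (A * B - C * C) / A.
    by field; lra.
  move=> /(Rmult_le_pos _ _ (Rlt_le _ _ A_gt0)).
  by rewrite /Rdiv -Rmult_assoc (Rmult_comm A) Rmult_assoc Rinv_r; lra.
case: (Req_dec C 0) => [-> | C_neq0]; first lra.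
have := quad_ge0 (- (B + 1) / (2 * C)).
have -> : - (B + 1) / (2 * C) * (- (B + 1) / (2 * C)) * 0
          + 2 * (- (B + 1) / (2 * C)) * C + B = -1 by field.
lra.
Qed.

Lemma dotv_self_ge0 n (a : vec n) : 0 <= dotv a a.
Proof. by apply: Rsum_ge0 => i; apply: Rle_0_sqr. Qed.

Lemma dotv_combination_self n t (a b : vec n) :
  dotv (fun i => t * a i + b i) (fun i => t * a i + b i)
  = t * t * dotv a a + 2 * t * dotv a b + dotv b b.
Proof.
rewrite /dotv (eq_bigr (fun i => t * t * (a i * a i) + (2 * t * (a i * b i) + b i * b i)));
  last by move=> i _; ring.
by rewrite !big_split /= !Rsum_mull Rplus_assoc.
Qed.

Lemma dotv_le_normv n (a b : vec n) : dotv a b <= normv a * normv b.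
Proof.
have CS : dotv a b * dotv a b <= dotv a a * dotv b b.
  apply: discriminant_le => [|t]; first exact: dotv_self_ge0.
  by rewrite -dotv_combination_self; apply: dotv_self_ge0.
rewrite /normv -sqrt_mult; try exact: dotv_self_ge0.
apply: (Rle_trans _ (Rabs (dotv a b))); first exact: Rle_abs.
by rewrite -sqrt_Rsqr_abs; apply: sqrt_le_1_alt.
Qed.

Lemma ln2_gt0 : 0 < ln 2.
Proof. by have := ln_lt_2; lra. Qed.

Lemma ln_le x y : 0 < x -> x <= y -> ln x <= ln y.
Proof.
move=> x_gt0 /Rle_lt_or_eq_dec [xy | <-]; last exact: Rle_refl.
exact/Rlt_le/ln_increasing.
Qed.

Lemma ln_nonpos x : x <= 0 -> ln x = 0.
Proof. by move=> x_le0; rewrite /ln; case: (Rlt_dec 0 x) => // x_gt0; exfalso; lra. Qed.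

Lemma log2_mult x y : 0 < x -> 0 < y -> log2 (x * y) = log2 x + log2 y.
Proof. by move=> x_gt0 y_gt0; rewrite /log2 ln_mult // /Rdiv Rmult_plus_distr_r. Qed.

Lemma log2_le_sub1 t : 0 < t -> log2 t <= (t - 1) / ln 2.
Proof.
move=> t_gt0; have := exp_ineq1_le (ln t); rewrite exp_ln // => ln_le_sub1.
by apply: Rmult_le_compat_r; [apply/Rlt_le/Rinv_0_lt_compat/ln2_gt0 | lra].
Qed.

(* No positivity of [x] is needed, as [ln] vanishes on non-positive reals. *)
Lemma log2_le x y : 1 <= y -> x <= y -> log2 x <= log2 y.
Proof.
move=> y_ge1 xy; rewrite /log2; apply: Rmult_le_compat_r.
  exact/Rlt_le/Rinv_0_lt_compat/ln2_gt0.
case: (Rlt_le_dec 0 x) => [x_gt0 | x_le0]; first exact: ln_le.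
by rewrite ln_nonpos // -ln_1; apply: ln_le; lra.
Qed.

Section MutualInfoBound.

Variables (k l : nat) (pxy : 'I_k -> 'I_l -> R) (c : 'I_l -> R) (S : R).

Let px x := \big[Rplus/0]_(y < l) pxy x y.
Let py y := \big[Rplus/0]_(x < k) pxy x y.

Hypothesis pxy_ge0 : forall x y, 0 <= pxy x y.
Hypothesis pxy_sum1 : \big[Rplus/0]_(x < k) px x = 1.
Hypothesis c_ge0 : forall y, 0 <= c y.
Hypothesis c_sum_le1 : \big[Rplus/0]_(y < l) c y <= 1.
Hypothesis density_le : forall x y, 0 < pxy x y ->
  0 < c y /\ log2 (pxy x y / (px x * py y)) <= S + log2 (c y / py y).

Let density_bound y := S + (c y / py y - 1) / ln 2.

Lemma mutual_info_term_le x y :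
  (if Rlt_dec 0 (pxy x y) then pxy x y * log2 (pxy x y / (px x * py y)) else 0)
  <= pxy x y * density_bound y.
Proof.
case: (Rlt_dec 0 (pxy x y)) => P_gt0 /=; last first.
  have -> : pxy x y = 0 by have := pxy_ge0 x y; lra.
  by rewrite Rmult_0_l; apply: Rle_refl.
have [c_gt0 dens] := density_le x y P_gt0.
have py_gt0 : 0 < py y.
  by apply: (Rlt_le_trans _ _ _ P_gt0); apply: Rsum_ge_term => x'.
apply: Rmult_le_compat_l; first lra.
have := log2_le_sub1 _ (Rdiv_lt_0_compat _ _ c_gt0 py_gt0).
rewrite /density_bound; lra.
Qed.

Lemma column_density_bound_le y :
  \big[Rplus/0]_(x < k) (pxy x y * density_bound y) <= py y * S + (c y - py y) / ln 2.
Proof.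
rewrite Rsum_mulr -/(py y) /density_bound.
have cancel_py : py y * (c y / py y) <= c y.
  have py_ge0 : 0 <= py y by apply: Rsum_ge0.
  case: (Rle_lt_or_eq_dec _ _ py_ge0) => [py_gt0 | py_eq0].
    by rewrite /Rdiv -Rmult_assoc (Rmult_comm (py y)) Rmult_assoc Rinv_r; lra.
  by rewrite -py_eq0 Rmult_0_l.
have := Rlt_le _ _ (Rinv_0_lt_compat _ ln2_gt0).
rewrite /Rdiv; nra.
Qed.

Lemma mutual_info_le_of_density : mutual_info pxy <= S.
Proof.
rewrite /mutual_info -/px -/py.
apply: (Rle_trans _ (\big[Rplus/0]_(x < k) \big[Rplus/0]_(y < l) (pxy x y * density_bound y))).
  by apply: Rsum_le => x; apply: Rsum_le => y; apply: mutual_info_term_le.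
rewrite exchange_big /=.
apply: (Rle_trans _ (\big[Rplus/0]_(y < l) (py y * S + (c y - py y) / ln 2))).
  by apply: Rsum_le => y; apply: column_density_bound_le.
have py_sum1 : \big[Rplus/0]_(y < l) py y = 1 by rewrite /py exchange_big.
rewrite big_split /= Rsum_mulr py_sum1 /Rdiv Rsum_mulr /Rminus big_split /=.
rewrite -(big_morph Ropp Ropp_plus_distr Ropp_0) py_sum1.
have inv_ln2_ge0 : 0 <= / ln 2 by apply/Rlt_le/Rinv_0_lt_compat/ln2_gt0.
have := Rmult_le_compat_r _ _ _ inv_ln2_ge0 c_sum_le1.
set sum_c := \big[Rplus/0]_(i < l) c i; nra.
Qed.

End MutualInfoBound.

Lemma dot1_scaled_effect_omega n g (m r : vec n) :
  dot1 (scaled_effect g m) (omega r) = g * (1 + dotv m r).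
Proof.
rewrite /dot1 /dotv /= (eq_bigr (fun i => g * (m i * r i))); last by move=> i _; ring.
by rewrite Rsum_mull Rmult_plus_distr_l Rmult_1_r.
Qed.

Lemma measurement_sum_omega n l (e : 'I_l -> vec1 n) (r : vec n) :
  \big[Rplus/0]_(y < l) fst (e y) = 1 ->
  (forall i, \big[Rplus/0]_(y < l) snd (e y) i = 0) ->
  \big[Rplus/0]_(y < l) dot1 (e y) (omega r) = 1.
Proof.
move=> fst_sum1 snd_sum0; rewrite /dot1 big_split /= Rsum_mulr fst_sum1 /dotv exchange_big /=.
rewrite (eq_bigr (fun i => 0)) ?big1 //; first by ring.
by move=> i _; rewrite Rsum_mulr snd_sum0 Rmult_0_l.
Qed.

Lemma Rmult_gt0_inv a b : 0 <= a -> 0 < a * b -> 0 < a /\ 0 < b.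
Proof.
move=> /Rle_lt_or_eq_dec [a_gt0 | <-] ab_gt0; last by rewrite Rmult_0_l in ab_gt0; lra.
by split => //; nra.
Qed.

Section SchemeBound.

Variables (n : nat) (Rset Mset : vec n -> Prop).

Hypothesis effect_decomp : forall e : vec1 n, is_effect Rset e ->
  exists g m, 0 <= g <= 1 /\ Mset m /\ e = scaled_effect g m.

Variables (k l : nat) (p : 'I_k -> R) (r : 'I_k -> vec n) (e : 'I_l -> vec1 n).

Hypothesis scheme : valid_scheme Rset p r e.

Lemma joint_ge0 x y : 0 <= joint p r e x y.
Proof.
have [p_ge0 [_ [r_in [e_eff _]]]] := scheme.
by apply: Rmult_le_pos => //; have [] := e_eff y (r x) (r_in x).
Qed.

Lemma joint_row_sum x : \big[Rplus/0]_(y < l) joint p r e x y = p x.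
Proof.
have [_ [_ [_ [_ [fst_sum1 snd_sum0]]]]] := scheme.
by rewrite /joint Rsum_mull measurement_sum_omega // Rmult_1_r.
Qed.

Lemma effect_weight_ge0 y : 0 <= fst (e y).
Proof.
have [_ [_ [_ [e_eff _]]]] := scheme.
by have [g [m [g01 [_ ->]]]] := effect_decomp _ (e_eff y); case: g01.
Qed.

Variable S : R.
Hypothesis log2_dot_le : forall r0 m, Rset r0 -> Mset m -> log2 (1 + dotv m r0) <= S.

Lemma joint_density_le x y : 0 < joint p r e x y ->
  let py := \big[Rplus/0]_(x' < k) joint p r e x' y in
  0 < fst (e y) /\
  log2 (joint p r e x y / (\big[Rplus/0]_(y' < l) joint p r e x y' * py))
    <= S + log2 (fst (e y) / py).
Proof.
move=> P_gt0 py; have [p_ge0 [_ [r_in [e_eff _]]]] := scheme.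
have [g [m [[g_ge0 _] [m_in e_eq]]]] := effect_decomp _ (e_eff y).
have joint_eq : joint p r e x y = p x * (g * (1 + dotv m (r x))).
  by rewrite /joint e_eq dot1_scaled_effect_omega.
have [px_gt0 /(Rmult_gt0_inv _ _ g_ge0) [g_gt0 dot_gt0]] :
    0 < p x /\ 0 < g * (1 + dotv m (r x)).
  by apply: Rmult_gt0_inv; rewrite -?joint_eq.
have py_gt0 : 0 < py.
  apply: (Rlt_le_trans _ _ _ P_gt0).
  by rewrite /py; apply: (Rsum_ge_term _ (fun x' => joint p r e x' y)) => x'; apply: joint_ge0.
rewrite e_eq /= joint_row_sum; split => //.
have -> : joint p r e x y / (p x * py) = (1 + dotv m (r x)) * (g / py).
  by rewrite joint_eq; field; lra.
rewrite log2_mult //; last exact: Rdiv_lt_0_compat.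
by apply: Rplus_le_compat_r; apply: log2_dot_le.
Qed.

Lemma mutual_info_joint_le : mutual_info (joint p r e) <= S.
Proof.
have [_ [p_sum1 [_ [_ [fst_sum1 _]]]]] := scheme.
apply: (mutual_info_le_of_density _ _ _ (fun y => fst (e y))).
- exact: joint_ge0.
- by under eq_bigr do rewrite joint_row_sum.
- exact: effect_weight_ge0.
- by rewrite fst_sum1; apply: Rle_refl.
- exact: joint_density_le.
Qed.

End SchemeBound.

Lemma log2_one_plus_dotv_le n (m r : vec n) M R0 :
  normv m <= M -> normv r <= R0 -> log2 (1 + dotv m r) <= log2 (1 + M * R0).
Proof.
move=> m_le r_le.
have normm_ge0 : 0 <= normv m := sqrt_pos _.
have normr_ge0 : 0 <= normv r := sqrt_pos _.
have norm_prod_le : normv m * normv r <= M * R0 by apply: Rmult_le_compat.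
apply: log2_le; first by have := Rmult_le_pos _ _ normm_ge0 normr_ge0; lra.
by have := dotv_le_normv _ m r; lra.
Qed.

Theorem proposition1 (n : nat) (Rset : vec n -> Prop) (Mset : vec n -> Prop) :
  compact_set Rset -> convex_set Rset ->
  (forall e : vec1 n, is_effect Rset e ->
     exists g m, 0 <= g <= 1 /\ Mset m /\ e = scaled_effect g m) ->
  (* chi_C(Omega) <= sup_{r in R, m in M} log2 (1 + m.r) *)
  (forall S : R,
     is_lub (fun t => exists r m, Rset r /\ Mset m /\ t = log2 (1 + dotv m r)) S ->
     forall (k l : nat) (p : 'I_k -> R) (r : 'I_k -> vec n) (e : 'I_l -> vec1 n),
       valid_scheme Rset p r e -> mutual_info (joint p r e) <= S) /\
  (* sup_{r in R, m in M} log2 (1 + m.r) <= log2 (1 + M R) *)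
  (forall M R0 : R,
     is_lub (fun t => exists m, Mset m /\ t = normv m) M ->
     is_lub (fun t => exists r, Rset r /\ t = normv r) R0 ->
     forall r m, Rset r -> Mset m -> log2 (1 + dotv m r) <= log2 (1 + M * R0)).
Proof.
move=> _ _ effect_decomp; split.
  move=> S [S_ub _] k l p r e scheme.
  apply: (mutual_info_joint_le _ _ _ effect_decomp _ _ _ _ _ scheme) => r0 m r0_in m_in.
  by apply: S_ub; exists r0, m.
move=> M R0 [M_ub _] [R0_ub _] r m r_in m_in.
by apply: log2_one_plus_dotv_le; [apply: M_ub; exists m | apply: R0_ub; exists r].
Qed.
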